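(* Let $T$ be a rooted binary phylogenetic tree under the $N_r$ model with state set $\{\alpha_1,\dots,\alpha_r\}$. Then for every $1\le k\le r-1$, $P_k(T)\ge Q_k(T)$.
   Context: A rooted binary phylogenetic tree is a finite tree with a distinguished root vertex $\rho$ of out-degree 2, all edges directed away from $\rho$, and every other vertex of in-degree 1 and out-degree 0 or 2; out-degree-0 vertices are leaves. Under the Neyman $r$-state model $N_r$ ($r\ge2$) on $\mathcal A=\{\alpha_1,\dots,\alpha_r\}$, each edge $e$ carries a substitution probability $p_e\in[0,\frac{r-1}{r}]$; given $F(\rho)$, states propagate independently along edges: for an edge $(u,v)$, $F(v)=F(u)$ with probability $1-p_e$, and otherwise $F(v)$ is uniform among the $r-1$ other states; $f$ is the restriction of $F$ to the leaves. Fitch sets: each leaf $x$ gets $\{f(x)\}$; a vertex with children $v_1,v_2$ gets $\mathrm{FS}(v_1)\cap\mathrm{FS}(v_2)$ if nonempty, else the union; $\mathrm{FS}(f,T)$ is the Fitch set of $\rho$. $P_k(T)=\mathbb P(\mathrm{FS}(f,T)=\mathcal R\mid F(\rho)=\alpha_1)$ for any $\mathcal R\subseteq\mathcal A$ with $\alpha_1\in\mathcal R$, $|\mathcal R|=k$, and $Q_k(T)=\mathbb P(\mathrm{FS}(f,T)=\mathcal R\mid F(\rho)=\alpha_1)$ for any $\mathcal R$ with $\alpha_1\notin\mathcal R$, $|\mathcal R|=k$ (independent of the choice of $\mathcal R$ by symmetry). *)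

From HB Require Import structures.
From mathcomp Require Import all_boot all_order all_algebra.
Set Implicit Arguments. Unset Strict Implicit. Unset Printing Implicit Defensive.
Import Order.TTheory GRing.Theory Num.Theory.
Local Open Scope ring_scope.

(* A rooted binary phylogenetic (sub)tree whose edges are labelled by
   substitution probabilities: [Node p1 t1 p2 t2] is a vertex with children
   t1 and t2, p1 (resp. p2) being the substitution probability of the edge
   to the root of t1 (resp. t2). Leaves are ordered left to right. *)
Inductive ptree (R : Type) :=
| Leaf : ptree R
| Node : R -> ptree R -> R -> ptree R -> ptree R.
Arguments Leaf {R}.

Definition is_node R (t : ptree R) : bool :=
  if t is Node _ _ _ _ then true else false.

Fixpoint nleaves R (t : ptree R) : nat :=
  match t with
  | Leaf => 1
  | Node _ t1 _ t2 => nleaves t1 + nleaves t2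
  end%N.

Fixpoint valid_probs (R : realFieldType) (r : nat) (t : ptree R) : bool :=
  match t with
  | Leaf => true
  | Node p1 t1 p2 t2 =>
      [&& 0 <= p1, p1 <= (r.-1)%:R / r%:R, 0 <= p2, p2 <= (r.-1)%:R / r%:R,
          @valid_probs R r t1 & @valid_probs R r t2]
  end.

Definition ntrans (R : realFieldType) (r : nat) (p : R) (a b : 'I_r) : R :=
  if a == b then 1 - p else p / (r.-1)%:R.

(* Probability that the leaves of t (left to right) carry the labelling f,
   given that the root of t is in state a. *)
Fixpoint leaf_prob (R : realFieldType) (r : nat) (t : ptree R) (a : 'I_r)
    (f : seq 'I_r) : R :=
  match t with
  | Leaf => if f is [:: x] then (x == a)%:R else 0
  | Node p1 t1 p2 t2 =>
      \sum_(b1 : 'I_r) \sum_(b2 : 'I_r)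
        @ntrans R r p1 a b1 * @ntrans R r p2 a b2 *
        (@leaf_prob R r t1 b1 (take (nleaves t1) f) *
         @leaf_prob R r t2 b2 (drop (nleaves t1) f))
  end.

Fixpoint fitch (R : Type) (r : nat) (t : ptree R) (f : seq 'I_r)
    : {set 'I_r} :=
  match t with
  | Leaf => if f is [:: x] then [set x] else set0
  | Node _ t1 _ t2 =>
      let S1 := @fitch R r t1 (take (nleaves t1) f) in
      let S2 := @fitch R r t2 (drop (nleaves t1) f) in
      if S1 :&: S2 != set0 then S1 :&: S2 else S1 :|: S2
  end.

Definition fitch_prob (R : realFieldType) (r : nat) (t : ptree R)
    (a : 'I_r) (S : {set 'I_r}) : R :=
  \sum_(f : (nleaves t).-tuple 'I_r | fitch t f == S) leaf_prob t a f.

From HB Require Import structures.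
From mathcomp Require Import all_boot all_order all_algebra.
From mathcomp Require Import fingroup perm.
From mathcomp Require Import ring zify.

Set Implicit Arguments.
Unset Strict Implicit.
Unset Printing Implicit Defensive.

Import Order.TTheory GRing.Theory Num.Theory.
Local Open Scope ring_scope.

(* The N_r model is invariant under relabelling of the states, so
   P(FS = S | root = a) depends only on #|S| and on whether a \in S; it is
   therefore enough to show that it does not decrease when the root state is
   moved from outside S to inside S.  This monotonicity is proved by
   induction on the tree: a child whose parent is in state c has Fitch set S
   with probability  kappa * P(FS = S | c) + (p/(r-1)) * sum_d P(FS = S | d),
   where kappa = 1 - p - p/(r-1) >= 0 because p <= (r-1)/r; and when the
   Fitch set of the root contains b but not a, each child's Fitch set that
   contains a also contains b, so the children's contributions compare
   termwise. *)

Lemma big_tuple_cat (V : nmodType) (T : finType) (n1 n2 : nat)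
    (F : seq T -> V) :
  \sum_(f : (n1 + n2).-tuple T) F f =
  \sum_(f1 : n1.-tuple T) \sum_(f2 : n2.-tuple T) F (f1 ++ f2).
Proof.
rewrite pair_big /=.
have cat_bij : bijective (fun q : n1.-tuple T * n2.-tuple T => cat_tuple q.1 q.2).
  apply: inj_card_bij; last by rewrite card_prod !card_tuple expnD.
  move=> [a1 a2] [b1 b2] /(congr1 val) /= /eqP.
  rewrite eqseq_cat ?size_tuple // => /andP[/eqP e1 /eqP e2].
  by congr pair; apply: val_inj.
by rewrite (reindex _ (onW_bij _ cat_bij)).
Qed.

Lemma big_tuple1 (V : nmodType) (T : finType) (F : seq T -> V) :
  \sum_(f : 1.-tuple T) F f = \sum_(x : T) F [:: x].
Proof.
have tuple1_bij : bijective (fun x : T => [tuple x]).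
  exists (@thead 0 T) => [x //|u].
  by apply: val_inj; case: u => [[|x [|y s]]].
by rewrite (reindex _ (onW_bij _ tuple1_bij)).
Qed.

Lemma big_fibers (V : nmodType) (I J : finType) (F : I -> J) (G : J -> I -> V) :
  \sum_(j : J) \sum_(i | F i == j) G j i = \sum_(i : I) G (F i) i.
Proof.
rewrite (exchange_big_dep xpredT) //=; apply: eq_bigr => i _.
by rewrite (big_pred1 (F i)) // => j; rewrite /= eq_sym.
Qed.

Lemma tperm_imset_id (T : finType) (x y : T) (X : {set T}) :
  (x \in X) = (y \in X) -> tperm x y @: X = X.
Proof.
move=> xy_X; apply/setP => z.
rewrite -{1}(tpermK x y z) mem_imset; last exact: perm_inj.
by case: tpermP => [->|->|].
Qed.

(* Induction on #|A :\: B|, swapping a point of A :\: B with one of B :\: A. *)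
Lemma exists_perm_imset (T : finType) (A B : {set T}) :
  #|A| = #|B| -> exists s : {perm T}, s @: A = B.
Proof.
move eqn: #|A :\: B| => n; elim: n A eqn => [|n IH] A cardAB eqAB.
  exists 1%g; apply/eqP; rewrite eqEcard.
  rewrite (eq_imset _ (@perm1 _)) imset_id.
  by rewrite -setD_eq0 -cards_eq0 cardAB /= eqAB.
have [x] : exists x, x \in A :\: B by apply/set0Pn; rewrite -cards_eq0 cardAB.
have [y] : exists y, y \in B :\: A.
  apply/set0Pn; rewrite -cards_eq0.
  have := cardsID A B; have := cardsID B A; rewrite setIC cardAB eqAB.
  by move=> ? ?; apply/eqP => BA0; lia.
rewrite !inE => /andP[yNA yB] /andP[xNB xA].
have swapD : (tperm x y @: A) :\: B = (A :\: B) :\ x.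
  apply/setP => z; rewrite !inE.
  rewrite -[z in z \in tperm x y @: A](tpermK x y) mem_imset; last exact: perm_inj.
  case: tpermP => [->|->|/eqP zx _]; last by rewrite zx.
  - by rewrite eqxx (negbTE yNA) andbF.
  - by rewrite yB andbF.
have [s sAB] : exists s : {perm T}, s @: (tperm x y @: A) = B.
  apply: IH; last by rewrite card_imset //; exact: perm_inj.
  by move: cardAB; rewrite swapD (cardsD1 x (A :\: B)) !inE xNB xA add1n => -[].
exists (tperm x y * s)%g; rewrite -sAB -imset_comp.
by apply: eq_imset => z; rewrite permM.
Qed.

Section FitchProbability.

Variables (R : realFieldType) (r : nat).
Implicit Types (t : ptree R) (p : R) (a b c : 'I_r) (S : {set 'I_r}).

Definition fitch_merge S1 S2 : {set 'I_r} :=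
  if S1 :&: S2 != set0 then S1 :&: S2 else S1 :|: S2.

Definition edge_fitch_prob p t c S : R :=
  \sum_(d : 'I_r) ntrans p c d * fitch_prob t d S.

(* The excess of the probability of keeping the state over that of moving to
   any fixed other state. *)
Definition ntrans_gap p : R := 1 - p - p / (r.-1)%:R.

Lemma ntransE p a b : ntrans p a b = (a == b)%:R * ntrans_gap p + p / (r.-1)%:R.
Proof.
by rewrite /ntrans /ntrans_gap; case: eqP => _; rewrite ?mul1r ?subrK // mul0r add0r.
Qed.

Lemma fitch_prob_Leaf c S : fitch_prob (@Leaf R) c S = (S == [set c])%:R.
Proof.
rewrite /fitch_prob big_mkcond (big_tuple1 (fun f : seq 'I_r =>
  if fitch (@Leaf R) f == S then leaf_prob (@Leaf R) c f else 0)) /=.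
rewrite (bigD1 c) //= eqxx big1 ?addr0; first by rewrite eq_sym; case: eqP.
by move=> x /negbTE ->; case: ifP.
Qed.

Lemma edge_fitch_prob_tuple p t c S :
  edge_fitch_prob p t c S =
  \sum_(f : (nleaves t).-tuple 'I_r | fitch t f == S)
    \sum_(d : 'I_r) ntrans p c d * leaf_prob t d f.
Proof.
rewrite /edge_fitch_prob /fitch_prob; under eq_bigr do rewrite mulr_sumr.
rewrite (exchange_big_dep xpredT) //= [RHS]big_mkcond.
by apply: eq_bigr => f _; case: (fitch t f == S) => //; apply: big_pred0.
Qed.

Lemma fitch_prob_Node p1 t1 p2 t2 c S :
  fitch_prob (Node p1 t1 p2 t2) c S =
  \sum_(S1 : {set 'I_r}) \sum_(S2 : {set 'I_r})
     (fitch_merge S1 S2 == S)%:R *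
     (edge_fitch_prob p1 t1 c S1 * edge_fitch_prob p2 t2 c S2).
Proof.
under eq_bigr => S1 _ do under eq_bigr => S2 _ do
  rewrite !edge_fitch_prob_tuple big_distrlr mulr_sumr /=.
under eq_bigr => S1 _ do under eq_bigr => S2 _ do
  under eq_bigr => f1 _ do rewrite mulr_sumr.
under eq_bigr => S1 _ do rewrite exchange_big.
under eq_bigr => S1 _ do under eq_bigr => f1 _ do rewrite big_fibers.
rewrite big_fibers /fitch_prob big_mkcond /=.
rewrite (big_tuple_cat _ _ (fun f : seq 'I_r =>
  if fitch (Node p1 t1 p2 t2) f == S then leaf_prob (Node p1 t1 p2 t2) c f
  else 0)) /=.
apply: eq_bigr => f1 _; apply: eq_bigr => f2 _.
rewrite take_size_cat ?drop_size_cat ?size_tuple // /fitch_merge.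
case: eqP => _; last by rewrite mul0r.
rewrite mul1r big_distrlr /=; apply: eq_bigr => b1 _; apply: eq_bigr => b2 _.
by rewrite mulrACA.
Qed.

Lemma edge_fitch_probE p t c S :
  edge_fitch_prob p t c S =
  ntrans_gap p * fitch_prob t c S + p / (r.-1)%:R * \sum_(d : 'I_r) fitch_prob t d S.
Proof.
rewrite /edge_fitch_prob; under eq_bigr do rewrite ntransE mulrDl.
rewrite big_split /= -mulr_sumr (bigD1 c) //= eqxx mul1r big1 ?addr0 // => d.
by rewrite eq_sym => /negbTE ->; rewrite mul0r mul0r.
Qed.

Lemma fitch_merge_perm (s : {perm 'I_r}) S1 S2 :
  fitch_merge (s @: S1) (s @: S2) = s @: fitch_merge S1 S2.
Proof.
rewrite /fitch_merge -imsetI; last by move=> x y _ _; apply: perm_inj.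
by rewrite imset_eq0; case: ifP; rewrite ?imsetU.
Qed.

Lemma edge_fitch_prob_perm_eq p t (s : {perm 'I_r}) :
  (forall c S, fitch_prob t (s c) (s @: S) = fitch_prob t c S) ->
  forall c S, edge_fitch_prob p t (s c) (s @: S) = edge_fitch_prob p t c S.
Proof.
move=> fp_s c S; rewrite /edge_fitch_prob (reindex_inj (@perm_inj _ s)).
by apply: eq_bigr => d _; rewrite fp_s /ntrans (inj_eq (@perm_inj _ s)).
Qed.

Lemma fitch_prob_perm t (s : {perm 'I_r}) c S :
  fitch_prob t (s c) (s @: S) = fitch_prob t c S.
Proof.
have imset_s_inj := imset_inj (@perm_inj _ s).
elim: t c S => [|p1 t1 IH1 p2 t2 IH2] c S.
  by rewrite !fitch_prob_Leaf -imset_set1 (inj_eq imset_s_inj).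
rewrite !fitch_prob_Node (reindex_inj imset_s_inj).
apply: eq_bigr => S1 _; rewrite (reindex_inj imset_s_inj).
apply: eq_bigr => S2 _.
by rewrite fitch_merge_perm (inj_eq imset_s_inj) !edge_fitch_prob_perm_eq.
Qed.

Lemma fitch_prob_tperm t a b S :
  (a \in S) = (b \in S) -> fitch_prob t a S = fitch_prob t b S.
Proof.
by move=> abS; rewrite -(fitch_prob_perm t (tperm a b)) tpermL tperm_imset_id.
Qed.

Lemma edge_fitch_prob_tperm p t a b S :
  (a \in S) = (b \in S) -> edge_fitch_prob p t a S = edge_fitch_prob p t b S.
Proof.
move=> abS; by rewrite -(edge_fitch_prob_perm_eq p (fitch_prob_perm t (tperm a b)))
  tpermL tperm_imset_id.
Qed.

Lemma fitch_prob_eq_card t a b (A B : {set 'I_r}) :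
  a \in A -> b \in B -> #|A| = #|B| -> fitch_prob t a A = fitch_prob t b B.
Proof.
move=> aA bB /exists_perm_imset[s sAB].
have saB : s a \in B by rewrite -sAB mem_imset //; exact: perm_inj.
by rewrite -(fitch_prob_perm t s) sAB (fitch_prob_tperm t (a := s a) (b := b)) ?saB.
Qed.

Section Monotonicity.

Hypothesis r_gt1 : (1 < r)%N.

Lemma ntrans_ge0 p a b :
  0 <= p -> p <= (r.-1)%:R / r%:R -> 0 <= ntrans p a b.
Proof.
move=> p_ge0 p_le; rewrite /ntrans; case: eqP => _; last by rewrite divr_ge0.
rewrite subr_ge0 (le_trans p_le) // ler_pdivrMr ?ltr0n ?mul1r ?ler_nat ?leq_pred //.
exact: ltnW.
Qed.

Lemma ntrans_gap_ge0 p : 0 <= p -> p <= (r.-1)%:R / r%:R -> 0 <= ntrans_gap p.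
Proof.
move=> p_ge0 p_le.
have r1_gt0 : 0 < (r.-1)%:R :> R by rewrite ltr0n -ltnS prednK // ltnW.
have rE : r%:R = (r.-1)%:R + 1 :> R by rewrite natr1 prednK // ltnW.
rewrite rE ler_pdivlMr ?ltr_wpDr // in p_le.
have -> : ntrans_gap p = ((r.-1)%:R - p * ((r.-1)%:R + 1)) / (r.-1)%:R.
  by rewrite /ntrans_gap; field; rewrite gt_eqF.
by rewrite divr_ge0 ?subr_ge0 // ltW.
Qed.

Lemma leaf_prob_ge0 t a f : valid_probs r t -> 0 <= leaf_prob t a f.
Proof.
elim: t a f => [|p1 t1 IH1 p2 t2 IH2] a f /=.
  by case: f => [|x [|y s]]; rewrite ?ler0n.
case/and5P => p1_ge0 p1_le p2_ge0 p2_le /andP[v1 v2].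
apply: sumr_ge0 => b1 _; apply: sumr_ge0 => b2 _.
by rewrite !mulr_ge0 ?ntrans_ge0 ?IH1 ?IH2.
Qed.

Lemma fitch_prob_ge0 t a S : valid_probs r t -> 0 <= fitch_prob t a S.
Proof. by move=> vt; apply: sumr_ge0 => f _; apply: leaf_prob_ge0. Qed.

Lemma edge_fitch_prob_ge0 p t c S :
  0 <= p -> p <= (r.-1)%:R / r%:R -> valid_probs r t ->
  0 <= edge_fitch_prob p t c S.
Proof.
move=> p_ge0 p_le vt; apply: sumr_ge0 => d _.
by rewrite mulr_ge0 ?ntrans_ge0 ?fitch_prob_ge0.
Qed.

Lemma edge_fitch_prob_mono p t a b S :
  0 <= p -> p <= (r.-1)%:R / r%:R ->
  (forall a b S, a \notin S -> b \in S -> fitch_prob t a S <= fitch_prob t b S) ->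
  (a \in S -> b \in S) -> edge_fitch_prob p t a S <= edge_fitch_prob p t b S.
Proof.
move=> p_ge0 p_le fp_mono abS.
case: (boolP (a \in S)) => aS; first by rewrite (edge_fitch_prob_tperm _ _ (b := b)) ?abS.
case: (boolP (b \in S)) => bS; last first.
  by rewrite (edge_fitch_prob_tperm _ _ (b := b)) ?(negbTE aS) ?(negbTE bS).
by rewrite !edge_fitch_probE lerD2r ler_wpM2l ?ntrans_gap_ge0 ?fp_mono.
Qed.

Lemma fitch_prob_notin_le t a b S :
  valid_probs r t -> a \notin S -> b \in S -> fitch_prob t a S <= fitch_prob t b S.
Proof.
elim: t a b S => [|p1 t1 IH1 p2 t2 IH2] a b S /=.
  move=> _ aNS bS; rewrite !fitch_prob_Leaf.
  by rewrite (_ : S == _ = false) ?ler0n //; apply: contraNF aNS => /eqP ->; rewrite set11.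
case/and5P => p1_ge0 p1_le p2_ge0 p2_le /andP[v1 v2] aNS bS.
rewrite !fitch_prob_Node; apply: ler_sum => S1 _; apply: ler_sum => S2 _.
case: eqP => [mergeS|_]; last by rewrite !mul0r.
have [abS1 abS2] : (a \in S1 -> b \in S1) /\ (a \in S2 -> b \in S2).
  move: mergeS; rewrite /fitch_merge; case: ifP => _ mergeS.
    by move: bS; rewrite -mergeS inE => /andP[-> ->].
  by move: aNS; rewrite -mergeS inE negb_or => /andP[/negbTE -> /negbTE ->].
rewrite !mul1r ler_pM ?edge_fitch_prob_ge0 //; apply: edge_fitch_prob_mono => //.
- by move=> *; apply: IH1.
- by move=> *; apply: IH2.
Qed.

End Monotonicity.

End FitchProbability.

Theorem theorem6 (R : realFieldType) (r : nat) (hr : (1 < r)%N)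
    (t : ptree R) (ht : is_node t) (hp : valid_probs r t)
    (k : nat) (hk1 : (1 <= k)%N) (hk2 : (k <= r - 1)%N)
    (SP SQ : {set 'I_r}) :
  let alpha1 : 'I_r := Ordinal (ltnW hr) in
  alpha1 \in SP -> #|SP| = k ->
  alpha1 \notin SQ -> #|SQ| = k ->
  fitch_prob t alpha1 SQ <= fitch_prob t alpha1 SP.
Proof.
move=> alpha1 alpha1_SP cardSP alpha1_SQ cardSQ.
have [b bSQ] : exists b, b \in SQ by apply/set0Pn; rewrite -cards_eq0 cardSQ -lt0n.
apply: le_trans (fitch_prob_notin_le hr hp alpha1_SQ bSQ) _.
by rewrite (fitch_prob_eq_card t bSQ alpha1_SP) ?cardSQ.
Qed.
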